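(* Let $G$ be an edge-coloured multigraph, $N$ a matching in $G$ and $C$ a set of colours such that for each $c \in C$ there are at least $k$ edges of $N$ which are $c$-horns in $N$. If $k|C| > 2|N|$, then there exists a $C$-rainbow horn in $N$.
   Context: Let $V$ be the vertex set of $G$. For vertex sets $X,Y$, $E[X,Y]$ is the set of edges with one endpoint in $X$ and the other in $Y$; for an edge $e=xy$, $E[e,Y]$ means $E[\{x,y\},Y]$. A horn in a matching $N$ is an edge $e \in N$ for which there exist two vertex-disjoint edges $e_1,e_2 \in E[e, V\setminus V(N)]$. It is a $c$-horn if such $e_1,e_2$ exist that are both of colour $c$, and it is a $C$-rainbow horn if such $e_1,e_2$ exist with $e_1$ of colour $c_1$ and $e_2$ of colour $c_2$ for two distinct $c_1,c_2 \in C$. *)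

From mathcomp Require Import all_boot.
Set Implicit Arguments. Unset Strict Implicit. Unset Printing Implicit Defensive.

(* A multigraph on vertex type V with edge type E: each edge e has
   endpoints eu e and ev e (parallel edges allowed). Colours: col : E -> K. *)
Section Horns.
Variables (V E K : finType) (eu ev : E -> V) (col : E -> K).

Definition ends (e : E) : {set V} := [set eu e; ev e].

Definition VN (N : {set E}) : {set V} := \bigcup_(e in N) ends e.

Definition is_matching (N : {set E}) : Prop :=
  forall e f, e \in N -> f \in N -> e != f -> [disjoint ends e & ends f].

Definition crossing (X Y : {set V}) (f : E) : bool :=
  ((eu f \in X) && (ev f \in Y)) || ((ev f \in X) && (eu f \in Y)).

Definition horn_with (P : K -> K -> bool) (N : {set E}) (e : E) : Prop :=
  e \in N /\
  exists e1 e2 : E,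
    [/\ crossing (ends e) (~: VN N) e1, crossing (ends e) (~: VN N) e2,
        [disjoint ends e1 & ends e2] & P (col e1) (col e2)].

Definition horn (N : {set E}) (e : E) : Prop := horn_with (fun _ _ => true) N e.

Definition c_horn (c : K) (N : {set E}) (e : E) : Prop :=
  horn_with (fun a b => (a == c) && (b == c)) N e.

Definition rainbow_horn (C : {set K}) (N : {set E}) (e : E) : Prop :=
  horn_with (fun a b => [&& a \in C, b \in C & a != b]) N e.

End Horns.

From mathcomp Require Import all_boot.
Set Implicit Arguments. Unset Strict Implicit. Unset Printing Implicit Defensive.

(* A c-horn at an edge xy of N has prongs xu and yv of colour c with u <> v
   outside V(N).  Double counting the pairs (c, e) with e a c-horn, k|C| > 2|N|
   gives an edge xy of N which is a c-horn for three colours c1, c2, c3 of C,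
   with prongs x u_i, y v_i.  Any x u_i and y v_j with i <> j and u_i <> v_j form
   a C-rainbow horn, and if u_1 = v_2 and u_3 = v_1 then u_3 = v_1 <> u_1 = v_2. *)

Section DoubleCounting.
Variables (I T : finType) (A : {set I}) (B : {set T}) (F : I -> {set T}).
Hypothesis subFB : forall i, i \in A -> F i \subset B.

Lemma double_counting :
  \sum_(i in A) #|F i| = \sum_(x in B) #|[set i in A | x \in F i]|.
Proof.
have card_in (U : finType) (X Y : {set U}) :
    X \subset Y -> #|X| = \sum_(x in Y) (x \in X).
  move=> sXY; rewrite -sum1_card big_mkcond [RHS]big_mkcond /=.
  apply: eq_bigr => x _.
  by case: (boolP (x \in X)) => [/(subsetP sXY)->|] //; case: (x \in Y).
rewrite (eq_bigr _ (fun i iA => card_in _ _ _ (subFB iA))) exchange_big /=.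
apply: eq_bigr => x _; rewrite (card_in _ _ A); last first.
  by apply/subsetP => i; rewrite inE => /andP[].
by apply: eq_bigr => i iA; rewrite inE iA.
Qed.

Lemma exists_card_gt m : m * #|B| < \sum_(i in A) #|F i| ->
  exists2 x, x \in B & m < #|[set i in A | x \in F i]|.
Proof.
rewrite double_counting => lt_sum; apply/exists_inP; apply: contraLR lt_sum.
move=> /exists_inPn le_m; rewrite -leqNgt mulnC -sum_nat_const.
by apply: leq_sum => x /le_m; rewrite -leqNgt.
Qed.

End DoubleCounting.

Lemma disjoint_set2 (T : finType) (x u y v : T) :
  [disjoint [set x; u] & [set y; v]] = [&& x != y, x != v, u != y & u != v].
Proof.
rewrite -setI_eq0; apply/eqP/and4P => [/setP I0 | [xy xv uy uv]].
  split; apply/negP => /eqP eq_w;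
    [move/(_ x): I0 | move/(_ x): I0 | move/(_ u): I0 | move/(_ u): I0];
    by rewrite !inE eq_w eqxx ?orbT.
apply/setP => w; rewrite !inE; apply/negbTE/andP => -[/orP[]/eqP-> /orP[]/eqP eq_w];
  by move: xy xv uy uv; rewrite eq_w eqxx.
Qed.

Section Prongs.
Variables (V E K : finType) (eu ev : E -> V) (col : E -> K) (N : {set E}).

Definition horn_withb (P : rel K) e : bool :=
  (e \in N) && [exists e1, exists e2,
    [&& crossing eu ev (ends eu ev e) (~: VN eu ev N) e1,
        crossing eu ev (ends eu ev e) (~: VN eu ev N) e2,
        [disjoint ends eu ev e1 & ends eu ev e2] & P (col e1) (col e2)]].

Lemma horn_withP (P : rel K) e :
  reflect (horn_with eu ev col P N e) (horn_withb P e).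
Proof.
apply: (iffP andP).
  case=> eN /existsP[e1 /existsP[e2 /and4P[]]].
  by split=> //; exists e1, e2.
case=> eN [e1 [e2 [] *]].
by split=> //; apply/existsP; exists e1; apply/existsP; exists e2; apply/and4P.
Qed.

Definition joins (f : E) (z u : V) : bool :=
  ((eu f == z) && (ev f == u)) || ((eu f == u) && (ev f == z)).

Lemma ends_joins f z u : joins f z u -> ends eu ev f = [set z; u].
Proof. by case/orP=> /andP[/eqP<- /eqP<-]; rewrite /ends // setUC. Qed.

Lemma crossing_joins (X Y : {set V}) f : crossing eu ev X Y f ->
  exists z u, [/\ z \in X, u \in Y & joins f z u].
Proof.
case/orP=> /andP[zX uY]; [exists (eu f), (ev f) | exists (ev f), (eu f)];
  by rewrite /joins !eqxx ?orbT.
Qed.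

Lemma joins_crossing (X Y : {set V}) f z u :
  joins f z u -> z \in X -> u \in Y -> crossing eu ev X Y f.
Proof.
rewrite /crossing => /orP[]/andP[/eqP-> /eqP->] zX uY; by rewrite zX uY ?orbT.
Qed.

Definition prongs (e f g : E) (u v : V) : bool :=
  [&& joins f (eu e) u, joins g (ev e) v,
      u \notin VN eu ev N, v \notin VN eu ev N & u != v].

Lemma prongs_mix e f g u v f' g' u' v' :
  prongs e f g u v -> prongs e f' g' u' v' -> u != v' -> prongs e f g' u v'.
Proof. by rewrite /prongs => /and5P[-> _ -> _ _] /and5P[_ -> _ -> _] ->. Qed.

Lemma horn_with_prongs (P : rel K) e : horn_with eu ev col P N e ->
  exists f g u v, prongs e f g u v && (P (col f) (col g) || P (col g) (col f)).
Proof.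
case=> _ [e1 [e2 [cross1 cross2 dj12 P12]]].
have [z1 [u1 [z1e u1N j1]]] := crossing_joins cross1.
have [z2 [u2 [z2e u2N j2]]] := crossing_joins cross2.
rewrite !in_setC in u1N u2N.
move: dj12; rewrite (ends_joins j1) (ends_joins j2) disjoint_set2.
case/and4P=> z12 _ _ u12.
move: z1e z2e z12; rewrite !inE => /orP[]/eqP ez1 /orP[]/eqP ez2; subst z1 z2;
  rewrite ?eqxx // => _.
- by exists e1, e2, u1, u2; rewrite /prongs j1 j2 u1N u2N u12 P12.
- by exists e2, e1, u2, u1; rewrite /prongs j1 j2 u1N u2N eq_sym u12 P12 orbT.
Qed.

Lemma prongs_horn_with (P : rel K) e f g u v : e \in N -> eu e != ev e ->
  prongs e f g u v -> P (col f) (col g) -> horn_with eu ev col P N e.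
Proof.
move=> eN xy /and5P[jf jg uN vN uv] Pfg.
have end_in_VN z : z \in ends eu ev e -> z \in VN eu ev N.
  by move=> ze; apply/bigcupP; exists e.
have xN : eu e \in VN eu ev N by rewrite end_in_VN // !inE eqxx.
have yN : ev e \in VN eu ev N by rewrite end_in_VN // !inE eqxx orbT.
split=> //; exists f, g; split=> //.
- by apply: (joins_crossing jf); rewrite !inE ?eqxx.
- by apply: (joins_crossing jg); rewrite !inE ?eqxx ?orbT.
rewrite (ends_joins jf) (ends_joins jg) disjoint_set2 xy uv /=.
by rewrite (memPn vN) // eq_sym (memPn uN).
Qed.

Lemma c_horn_prongs c e : c_horn eu ev col c N e ->
  exists f g u v, [/\ prongs e f g u v, col f = c & col g = c].
Proof.
case/horn_with_prongs=> f [g [u [v /andP[p_fg]]]].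
by case/orP=> /andP[/eqP cf /eqP cg]; exists f, g, u, v.
Qed.

Lemma rainbow_horn_of_c_horns (C A : {set K}) e :
  e \in N -> eu e != ev e -> A \subset C -> 2 < #|A| ->
  {in A, forall c, c_horn eu ev col c N e} -> rainbow_horn eu ev col C N e.
Proof.
move=> eN xy /subsetP AC.
move=> /card_gt2P[c1 [c2 [c3 [[c1A c2A c3A] [c12 c23 c31]]]]] hA.
have [c1C c2C c3C] := And3 (AC _ c1A) (AC _ c2A) (AC _ c3A).
have [f1 [g1 [u1 [v1 [p1 cf1 cg1]]]]] := c_horn_prongs (hA _ c1A).
have [f2 [g2 [u2 [v2 [p2 cf2 cg2]]]]] := c_horn_prongs (hA _ c2A).
have [f3 [g3 [u3 [v3 [p3 cf3 cg3]]]]] := c_horn_prongs (hA _ c3A).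
have mix f g u v f' g' u' v' :
    prongs e f g u v -> prongs e f' g' u' v' -> u != v' ->
    [&& col f \in C, col g' \in C & col f != col g'] -> rainbow_horn eu ev col C N e.
  by move=> p p' uv'; apply: prongs_horn_with eN xy (prongs_mix p p' uv').
have [u1v2 | n] := eqVneq u1 v2; first last.
  by apply: mix p1 p2 n _; rewrite cf1 cg2 c1C c2C.
have [u3v1 | n] := eqVneq u3 v1; first last.
  by apply: mix p3 p1 n _; rewrite cf3 cg1 c1C c3C.
have u3v2 : u3 != v2 by rewrite u3v1 -u1v2 eq_sym; case/and5P: p1 => _ _ _ _ ->.
by apply: mix p3 p2 u3v2 _; rewrite cf3 cg2 c2C c3C eq_sym.
Qed.

End Prongs.

Theorem lemma2p2 (V E K : finType) (eu ev : E -> V) (col : E -> K)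
  (loopless : forall e : E, eu e != ev e)
  (N : {set E}) (HN : is_matching eu ev N)
  (C : {set K}) (k : nat)
  (Hk : forall c, c \in C ->
        exists S : {set E}, [/\ S \subset N, k <= #|S| &
                               forall e, e \in S -> c_horn eu ev col c N e])
  (Hsize : 2 * #|N| < k * #|C|) :
  exists e : E, rainbow_horn eu ev col C N e.
Proof.
pose c_horns c :=
  [set e in N | horn_withb eu ev col N (fun a b => (a == c) && (b == c)) e].
have c_horns_N c : c \in C -> c_horns c \subset N.
  by move=> _; apply/subsetP => e; rewrite inE => /andP[].
have many_c_horns : k * #|C| <= \sum_(c in C) #|c_horns c|.
  rewrite mulnC -sum_nat_const; apply: leq_sum => c /Hk[S [SN kS S_horns]].
  apply: leq_trans kS (subset_leq_card _); apply/subsetP => e eS.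
  by rewrite inE (subsetP SN) //=; apply/horn_withP; exact: S_horns.
have [e eN rich_e] := exists_card_gt c_horns_N (leq_trans Hsize many_c_horns).
exists e; apply: rainbow_horn_of_c_horns eN (loopless e) _ rich_e _.
  by apply/subsetP => c; rewrite inE => /andP[].
by move=> c; rewrite !inE => /andP[_ /andP[_ /horn_withP]].
Qed.
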